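(* Let $G$ be a group acting on a set $X$. Let $A$ be a nonempty finite subset of $G$ and $Y$ a finite subset of $X$, and suppose $|A\cdot Y|\leq\alpha|A|$ for some $\alpha\in\mathbb{R}_{\geq0}$. Then there exists a nonempty subset $B\subset A$ such that $|CB\cdot Y|\leq\alpha|CB|$ for every finite subset $C$ of $G$.
   Context: $CB=\{cb\mid c\in C,b\in B\}$ and $S\cdot Y=\{s\cdot y\mid s\in S,y\in Y\}$. *)

From HB Require Import structures.
From mathcomp Require Import all_boot all_order all_algebra.
From mathcomp Require Import monoid.
From mathcomp Require Import finmap.
Set Implicit Arguments. Unset Strict Implicit. Unset Printing Implicit Defensive.
Import Order.TTheory GRing.Theory Num.Theory.
Local Open Scope fset_scope.

Definition is_action (G : groupType) (X : Type) (act : G -> X -> X) : Prop :=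
  (forall x, act 1%g x = x) /\
  (forall g h x, act (g * h)%g x = act g (act h x)).

Definition fset_mul (G : groupType) (C B : {fset G}) : {fset G} :=
  [fset (c * b)%g | c in C, b in B].

Definition fset_act (G : groupType) (X : choiceType) (act : G -> X -> X)
  (S : {fset G}) (Y : {fset X}) : {fset X} :=
  [fset act s y | s in S, y in Y].

From HB Require Import structures.
From mathcomp Require Import all_boot all_order all_algebra.
From mathcomp Require Import monoid finmap.
From mathcomp Require Import reals.
From mathcomp Require Import lra.
Set Implicit Arguments. Unset Strict Implicit. Unset Printing Implicit Defensive.
Import Order.TTheory GRing.Theory Num.Theory.
Local Open Scope fset_scope.
Local Open Scope ring_scope.

(* Petridis' argument.  Among the nonempty B ⊆ A choose one minimising
   K := |B·Y| / |B|; then K <= alpha and |D·Y| >= K |D| for every D ⊆ B.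
   Adding one element c to C, the new part of (C ∪ {c})B·Y is c(B·Y) minus
   its overlap with (CB)·Y, and that overlap contains c(D·Y) for the set D of
   b ∈ B with cb ∈ CB.  As |cB ∩ CB| = |D|, the bound |CB·Y| <= K |CB|
   propagates by induction on C. *)

Lemma fset_argmin (T : choiceType) d (R : orderType d) (f : T -> R)
    (F : {fset T}) :
  F != fset0 -> exists2 x, x \in F & forall y, y \in F -> (f x <= f y)%O.
Proof.
case/fset0Pn => x0 x0F.
case: (@arg_minP _ _ _ [` x0F] predT (fun i : F => f (val i)) erefl).
by move=> i _ imin; exists (val i) => [|y yF]; [exact: valP|exact: (imin [` yF])].
Qed.

Lemma imfset_sep_memE (K V : choiceType) (f : K -> V) (B : {fset K})
    (P : {fset V}) :
  [fset f b | b in [fset b in B | f b \in P]] = P `&` [fset f b | b in B].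
Proof.
apply/fsetP => v; apply/imfsetP/fsetIP => [[b /= /[!inE] /andP[bB fbP] ->]|].
  by split=> //; apply/imfsetP; exists b.
by case=> vP /imfsetP[b /= bB vE]; exists b; rewrite //= !inE bB -vE vP.
Qed.

Section GroupSets.
Variable G : groupType.
Implicit Types (c : G) (B C S : {fset G}).

Lemma card_lmul_fset c S : #|` [fset (c * s)%g | s in S]| = #|` S|.
Proof. by rewrite card_imfset //=; apply: mulgI. Qed.

Lemma fset_mul0l B : fset_mul fset0 B = fset0.
Proof. by apply/fsetP => g; rewrite inE; apply/imfset2P => -[c]; rewrite inE. Qed.

Lemma fset_mulU1l c C B :
  fset_mul (c |` C) B = [fset (c * b)%g | b in B] `|` fset_mul C B.
Proof.
apply/fsetP => g; rewrite inE; apply/imfset2P/orP.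
  case=> c' /[!inE] /orP[/eqP->|c'C] [b /= bB ->].
    by left; apply/imfsetP; exists b.
  by right; apply/imfset2P; exists c' => //; exists b.
case=> [/imfsetP[b /= bB ->]|/imfset2P[c' /= c'C [b /= bB ->]]].
  by exists c; rewrite /= ?fset1U1 //; exists b.
by exists c'; rewrite /= ?fset1Ur //; exists b.
Qed.

End GroupSets.

Section ActionSets.
Variables (G : groupType) (X : choiceType) (act : G -> X -> X).
Hypothesis actP : is_action act.
Implicit Types (c : G) (S T : {fset G}) (Y Z : {fset X}).

Lemma act_mul c c' x : act (c * c')%g x = act c (act c' x).
Proof. by case: actP. Qed.

Lemma act_inj c : injective (act c).
Proof.
case: actP => act1 _ x y e.
by rewrite -(act1 x) -(act1 y) -(mulVg c) !act_mul e.
Qed.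

Lemma card_act_fset c Z : #|` [fset act c z | z in Z]| = #|` Z|.
Proof. by rewrite card_imfset //=; apply: act_inj. Qed.

Lemma fset_act0l Y : fset_act act fset0 Y = fset0.
Proof. by apply/fsetP => x; rewrite inE; apply/imfset2P => -[s]; rewrite inE. Qed.

Lemma fset_act_subset S T Y :
  S `<=` T -> fset_act act S Y `<=` fset_act act T Y.
Proof.
move=> /fsubsetP ST; apply/fsubsetP => x /imfset2P[s /= sS [y /= yY ->]].
by apply/imfset2P; exists s; [exact: ST|exists y].
Qed.

Lemma fset_actU S T Y :
  fset_act act (S `|` T) Y = fset_act act S Y `|` fset_act act T Y.
Proof.
apply/fsetP => x; rewrite inE; apply/imfset2P/orP.
  by case=> s /[!inE] /orP[] sST [y /= yY ->]; [left|right];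
    apply/imfset2P; exists s => //; exists y.
by case=> /imfset2P[s /= sST [y /= yY ->]];
  exists s; rewrite /= ?inE ?sST ?orbT //; exists y.
Qed.

Lemma fset_act_lmul c S Y :
  fset_act act [fset (c * s)%g | s in S] Y
  = [fset act c z | z in fset_act act S Y].
Proof.
apply/fsetP => x; apply/imfset2P/imfsetP.
  case=> g /imfsetP[s /= sS ->] [y /= yY ->].
  by exists (act s y); [apply/imfset2P; exists s => //; exists y|rewrite act_mul].
case=> z /imfset2P[s /= sS [y /= yY ->]] ->.
by exists (c * s)%g; [apply/imfsetP; exists s|exists y; rewrite ?act_mul].
Qed.

End ActionSets.

Section Petridis.
Variables (R : realType) (G : groupType) (X : choiceType) (act : G -> X -> X).
Hypothesis actP : is_action act.
Variables (B : {fset G}) (Y : {fset X}) (K : R).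
Hypothesis cardBY : #|` fset_act act B Y|%:R = K * #|` B|%:R.
Hypothesis minB :
  forall D, D `<=` B -> K * #|` D|%:R <= #|` fset_act act D Y|%:R.

Lemma petridis_step c C :
  #|` fset_act act (fset_mul C B) Y|%:R <= K * #|` fset_mul C B|%:R ->
  #|` fset_act act (fset_mul (c |` C) B) Y|%:R
    <= K * #|` fset_mul (c |` C) B|%:R.
Proof.
rewrite fset_mulU1l fset_actU.
set P := fset_mul C B; set Q := [fset (c * b)%g | b in B] => le_P.
set D := [fset b in B | (c * b)%g \in P].
have DB : D `<=` B by apply/fsubsetP => b /[!inE] /andP[].
have QPE : Q `&` P = [fset (c * b)%g | b in D] by rewrite imfset_sep_memE fsetIC.
have overlap : fset_act act (Q `&` P) Y
    `<=` fset_act act Q Y `&` fset_act act P Y.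
  by rewrite fsubsetI !fset_act_subset ?fsubsetIl ?fsubsetIr.
have := fsubset_leq_card overlap.
rewrite QPE (fset_act_lmul actP) (card_act_fset actP) -(ler_nat R) => le_overlap.
have le_D := minB DB.
have := cardfsUI Q P; rewrite QPE !card_lmul_fset.
move=> /(congr1 (GRing.natmul (1 : R))) /[!natrD] /(canRL (addrK _)) ->.
have cardQY : #|` fset_act act Q Y| = #|` fset_act act B Y|.
  by rewrite (fset_act_lmul actP) (card_act_fset actP).
have := cardfsUI (fset_act act Q Y) (fset_act act P Y); rewrite cardQY.
move=> /(congr1 (GRing.natmul (1 : R))) /[!natrD] cardQPY.
rewrite mulrBr mulrDr -cardBY; lra.
Qed.

Lemma petridis C :
  #|` fset_act act (fset_mul C B) Y|%:R <= K * #|` fset_mul C B|%:R.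
Proof.
elim/fset1U_rect: C => [|c C _]; last exact: petridis_step.
by rewrite fset_mul0l fset_act0l !cardfs0 mulr0.
Qed.

End Petridis.

Theorem mainTheorem10 (R : realType) (G : groupType) (X : choiceType)
  (act : G -> X -> X) (Hact : is_action act)
  (A : {fset G}) (Y : {fset X}) (alpha : R) :
  A != fset0 -> 0 <= alpha ->
  (#|` fset_act act A Y|%:R <= alpha * #|` A|%:R) ->
  exists B : {fset G}, [/\ B != fset0, (B `<=` A)%fset &
    forall C : {fset G},
      #|` fset_act act (fset_mul C B) Y|%:R <= alpha * #|` fset_mul C B|%:R].
Proof.
move=> A0 _ le_A.
pose ratio (S : {fset G}) : R := #|` fset_act act S Y|%:R / #|` S|%:R.
have card_gt0 (S : {fset G}) : S != fset0 -> 0 < #|` S|%:R :> R.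
  by rewrite ltr0n lt0n cardfs_eq0.
pose F := [fset S in fpowerset A | S != fset0].
have AF : A \in F by rewrite !inE fpowersetE fsubset_refl A0.
have [|B /[!inE] /andP[/[!fpowersetE] BA B0] minB] := @fset_argmin _ _ _ ratio F.
  by apply/fset0Pn; exists A.
have le_alpha : ratio B <= alpha.
  by apply: le_trans (minB A AF) _; rewrite ler_pdivrMr ?card_gt0.
have cardBY : #|` fset_act act B Y|%:R = ratio B * #|` B|%:R.
  by rewrite mulfVK // gt_eqF ?card_gt0.
have minB' D : D `<=` B -> ratio B * #|` D|%:R <= #|` fset_act act D Y|%:R.
  have [->|D0 DB] := eqVneq D fset0; first by rewrite cardfs0 mulr0.
  rewrite -ler_pdivlMr ?card_gt0 //; apply: minB.
  by rewrite !inE fpowersetE (fsubset_trans DB BA) D0.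
exists B; split => // C.
apply: le_trans (petridis Hact cardBY minB' C) _.
by rewrite ler_wpM2r.
Qed.
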